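(* Let $Q=(q_n)$ be a basic sequence and let $x=E_0.E_1E_2\cdots$ (w.r.t. $Q$) be $Q$-distribution normal. If $y=F_0.F_1F_2\cdots$ (w.r.t. $Q$) satisfies $$\lim_{N\to\infty}\frac1N\sum_{n=1}^N\frac{|E_n-F_n|+1}{q_n}=0,$$ then $y$ is $Q$-distribution normal.
   Context: A basic sequence is a sequence $Q=(q_n)_{n\ge1}$ of integers with $q_n\ge2$. The $Q$-Cantor series expansion of a real $x$ is the unique expansion $x=E_0+\sum_{n\ge1}\frac{E_n}{q_1\cdots q_n}$ with $E_0=\lfloor x\rfloor$, $E_n\in\{0,\dots,q_n-1\}$ and $E_n\ne q_n-1$ infinitely often; written $x=E_0.E_1E_2\cdots$ w.r.t. $Q$. Let $T_{Q,n}(x)=\left(\prod_{j=1}^n q_j\right)x \bmod 1$ (with $T_{Q,0}(x)=x\bmod1$). A real $x$ is $Q$-distribution normal if the sequence $(T_{Q,n}(x))_{n\ge0}$ is uniformly distributed modulo $1$. *)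

From Stdlib Require Import Reals Lra Lia.
Open Scope R_scope.

(* A basic sequence Q = (q_n)_{n>=1}, represented as q : nat -> nat,
   only the values at n >= 1 matter. *)
Definition basic_seq (q : nat -> nat) : Prop := forall n, (1 <= n)%nat -> (2 <= q n)%nat.

Fixpoint qprod (q : nat -> nat) (n : nat) : R :=
  match n with
  | O => 1
  | S m => qprod q m * INR (q (S m))
  end.

Definition frac (x : R) : R := x - IZR (Int_part x).
Definition floorR (x : R) : Z := Int_part x.

Definition cantor_expansion (q : nat -> nat) (x : R) (E : nat -> Z) : Prop :=
  E 0%nat = floorR x /\
  (forall n, (1 <= n)%nat -> (0 <= E n)%Z /\ (E n < Z.of_nat (q n))%Z) /\
  (forall m, exists n, (m <= n)%nat /\ (1 <= n)%nat /\ E n <> (Z.of_nat (q n) - 1)%Z) /\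
  Un_cv (fun N => IZR (E 0%nat) + sum_f 1 N (fun n => IZR (E n) / qprod q n)) x.

Definition TQ (q : nat -> nat) (n : nat) (x : R) : R := frac (qprod q n * x).

Fixpoint count_in (u : nat -> R) (a b : R) (N : nat) : nat :=
  match N with
  | O => O
  | S m => (count_in u a b m +
            (if Rle_dec a (u m) then if Rlt_dec (u m) b then 1 else 0 else 0))%nat
  end.

Definition u_d_mod1 (u : nat -> R) : Prop :=
  forall a b, 0 <= a -> a < b -> b <= 1 ->
    Un_cv (fun N => INR (count_in (fun n => frac (u n)) a b N) / INR N) (b - a).

Definition Q_distribution_normal (q : nat -> nat) (x : R) : Prop :=
  u_d_mod1 (fun n => TQ q n x).

(* Write [S_n] for the partial sums of the expansion of [x] and
   [r_n = q_1 ... q_n (x - S_n)].  Since [q_1 ... q_n S_n] is an integer and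
   [0 <= r_n < 1], we have [T_{Q,n}(x) = r_n].  The recursion
   [r_n = (E_(n+1) + r_(n+1)) / q_(n+1)] gives
   [|T_{Q,n}(x) - T_{Q,n}(y)| <= (|E_(n+1) - F_(n+1)| + 1) / q_(n+1)], whose
   Cesaro means tend to 0 by hypothesis.  Two sequences in [[0,1)] whose
   distances have vanishing Cesaro means have the same asymptotic frequencies:
   by a Markov-type count, at most [sum_(n<N) c_n / d] indices separate by more
   than [d], so uniform distribution transfers. *)

From Stdlib Require Import Reals Lra Lia.
Open Scope R_scope.

Fixpoint sum_upto (c : nat -> R) (N : nat) : R :=
  match N with O => 0 | S m => sum_upto c m + c m end.

Lemma sum_f_1_sum_upto (f : nat -> R) (N : nat) :
  (1 <= N)%nat -> sum_f 1 N f = sum_upto (fun n => f (S n)) N.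
Proof.
  intros HN. destruct N as [|N]; [lia|]. clear HN. unfold sum_f.
  replace (S N - 1)%nat with N by lia.
  induction N as [|N IH]; simpl; [ring|].
  rewrite IH, Nat.add_1_r. reflexivity.
Qed.

Lemma Un_cv_ext_S (u v : nat -> R) (l : R) :
  (forall n, u (S n) = v (S n)) -> Un_cv u l -> Un_cv v l.
Proof.
  intros Huv Hu. apply (CV_shift v 1).
  apply Un_cv_ext with (fun n => u (n + 1)%nat).
  - intro n. rewrite Nat.add_1_r. apply Huv.
  - apply CV_shift', Hu.
Qed.

Lemma Un_cv_const (c : R) : Un_cv (fun _ => c) c.
Proof.
  intros eps Heps. exists 0%nat. intros n _.
  unfold Rdist. rewrite Rminus_diag, Rabs_R0. exact Heps.
Qed.

Lemma Un_cv_ge_lim (u : nat -> R) (l c : R) : (forall n, c <= u n) -> Un_cv u l -> c <= l.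
Proof. intros Hc Hu. exact (Rle_cv_lim Hc (Un_cv_const c) Hu). Qed.

Lemma Un_cv_le_lim (u : nat -> R) (l c : R) : (forall n, u n <= c) -> Un_cv u l -> l <= c.
Proof. intros Hc Hu. exact (Rle_cv_lim Hc Hu (Un_cv_const c)). Qed.

Lemma frac_IZR_plus (z : Z) (r : R) : 0 <= r < 1 -> frac (IZR z + r) = r.
Proof. intros Hr. unfold frac. rewrite <- (Int_part_spec (IZR z + r) z) by lra. ring. Qed.

Lemma frac_id (r : R) : 0 <= r < 1 -> frac r = r.
Proof. intros Hr. rewrite <- (Rplus_0_l r) at 1. exact (frac_IZR_plus 0 r Hr). Qed.

Lemma frac_range (r : R) : 0 <= frac r < 1.
Proof. unfold frac. destruct (base_Int_part r). lra. Qed.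

Lemma div_le_inv_sub (e t P Q : R) :
  0 < P -> 0 < Q -> e <= Q - t -> e / (P * Q) <= 1 / P - t / (P * Q).
Proof.
  intros HP HQ He.
  replace (1 / P - t / (P * Q)) with ((Q - t) / (P * Q)) by (field; lra).
  apply Rmult_le_compat_r; [|exact He].
  left. apply Rinv_0_lt_compat, Rmult_lt_0_compat; assumption.
Qed.

Definition cantor_partial (q : nat -> nat) (E : nat -> Z) (N : nat) : R :=
  IZR (E 0%nat) + sum_upto (fun n => IZR (E (S n)) / qprod q (S n)) N.

Definition cantor_tail (q : nat -> nat) (E : nat -> Z) (x : R) (n : nat) : R :=
  qprod q n * (x - cantor_partial q E n).

Lemma cantor_partial_S (q : nat -> nat) (E : nat -> Z) (n : nat) :
  cantor_partial q E (S n) = cantor_partial q E n + IZR (E (S n)) / qprod q (S n).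
Proof. unfold cantor_partial. simpl. ring. Qed.

Section CantorPartialSums.

Variable q : nat -> nat.
Hypothesis q_basic : basic_seq q.

Lemma INR_q_ge2 (n : nat) : 2 <= INR (q (S n)).
Proof.
  assert (H := le_INR _ _ (q_basic (S n) ltac:(lia))). simpl in H. lra.
Qed.

Lemma qprod_pos (n : nat) : 0 < qprod q n.
Proof.
  induction n as [|n IH]; simpl; [lra|].
  apply Rmult_lt_0_compat; [exact IH|]. assert (H := INR_q_ge2 n). lra.
Qed.

Variable E : nat -> Z.

Lemma qprod_cantor_partial_integer (n : nat) :
  exists z, qprod q n * cantor_partial q E n = IZR z.
Proof.
  induction n as [|n [z Hz]].
  - exists (E 0%nat). unfold cantor_partial. simpl. ring.
  - exists (Z.of_nat (q (S n)) * z + E (S n))%Z.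
    rewrite cantor_partial_S, plus_IZR, mult_IZR, <- INR_IZR_INZ, <- Hz.
    assert (Hp := qprod_pos n). assert (Hq := INR_q_ge2 n).
    simpl qprod. field. lra.
Qed.

Lemma cantor_tail_S (x : R) (n : nat) :
  cantor_tail q E x n = (IZR (E (S n)) + cantor_tail q E x (S n)) / INR (q (S n)).
Proof.
  unfold cantor_tail. rewrite cantor_partial_S.
  assert (Hp := qprod_pos n). assert (Hq := INR_q_ge2 n).
  simpl qprod. field. lra.
Qed.

Lemma digit_term_le (n : nat) (t : R) :
  IZR (E (S n)) <= INR (q (S n)) - t ->
  IZR (E (S n)) / qprod q (S n) <= 1 / qprod q n - t / qprod q (S n).
Proof.
  intros Ht. simpl qprod.
  apply div_le_inv_sub; [apply qprod_pos | assert (H := INR_q_ge2 n); lra | exact Ht].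
Qed.

Hypothesis digits : forall n, (1 <= n)%nat -> (0 <= E n < Z.of_nat (q n))%Z.

Lemma cantor_partial_increment (n j : nat) :
  0 <= cantor_partial q E (n + j) - cantor_partial q E n
    <= 1 / qprod q n - 1 / qprod q (n + j).
Proof.
  induction j as [|j IH].
  - rewrite Nat.add_0_r. lra.
  - rewrite Nat.add_succ_r, cantor_partial_S.
    destruct (digits (S (n + j)) ltac:(lia)) as [Hlo Hhi].
    assert (Hle : IZR (E (S (n + j))) <= INR (q (S (n + j))) - 1).
    { rewrite INR_IZR_INZ, <- minus_IZR. apply IZR_le. lia. }
    assert (Hterm := digit_term_le (n + j) 1 Hle).
    assert (Hnonneg : 0 <= IZR (E (S (n + j))) / qprod q (S (n + j))).
    { apply Rle_mult_inv_pos; [apply IZR_le; exact Hlo | apply qprod_pos]. }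
    lra.
Qed.

End CantorPartialSums.

Section CantorTail.

Variable q : nat -> nat.
Hypothesis q_basic : basic_seq q.
Variables (E : nat -> Z) (x : R).
Hypothesis x_expansion : cantor_expansion q x E.

Let digits : forall n, (1 <= n)%nat -> (0 <= E n < Z.of_nat (q n))%Z :=
  proj1 (proj2 x_expansion).

Lemma cantor_partial_cv : Un_cv (cantor_partial q E) x.
Proof.
  pose proof x_expansion as (_ & _ & _ & Hcv).
  refine (Un_cv_ext_S _ _ _ _ Hcv). intro n.
  unfold cantor_partial. rewrite sum_f_1_sum_upto by lia. reflexivity.
Qed.

Lemma cantor_partial_le (n : nat) : cantor_partial q E n <= x.
Proof.
  apply (Un_cv_ge_lim (fun j => cantor_partial q E (j + n))).
  - intro j. rewrite Nat.add_comm.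
    destruct (cantor_partial_increment q q_basic E digits n j). lra.
  - exact (CV_shift' _ n x cantor_partial_cv).
Qed.

Lemma le_cantor_partial_add (n : nat) : x <= cantor_partial q E n + 1 / qprod q n.
Proof.
  apply (Un_cv_le_lim (fun j => cantor_partial q E (j + n))).
  - intro j. rewrite Nat.add_comm.
    destruct (cantor_partial_increment q q_basic E digits n j).
    assert (0 < 1 / qprod q (n + j))
      by (apply Rdiv_lt_0_compat; [lra | apply qprod_pos; exact q_basic]).
    lra.
  - exact (CV_shift' _ n x cantor_partial_cv).
Qed.

(* Strictness comes from a digit [E (S k) <= q_(k+1) - 2] with [k >= n]. *)
Lemma lt_cantor_partial_add (n : nat) : x < cantor_partial q E n + 1 / qprod q n.
Proof.
  pose proof x_expansion as (_ & _ & Hnonmax & _).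
  destruct (Hnonmax (S n)) as [[|k] (Hnk & _ & Hk)]; [lia|].
  destruct (digits (S k) ltac:(lia)) as [_ Hhi].
  assert (Hle2 : IZR (E (S k)) <= INR (q (S k)) - 2).
  { rewrite INR_IZR_INZ, <- minus_IZR. apply IZR_le. lia. }
  assert (Hterm := digit_term_le q q_basic E k 2 Hle2).
  assert (Hhead := cantor_partial_increment q q_basic E digits n (k - n)).
  replace (n + (k - n))%nat with k in Hhead by lia.
  assert (Htail := le_cantor_partial_add (S k)).
  rewrite cantor_partial_S in Htail.
  assert (0 < 1 / qprod q (S k))
    by (apply Rdiv_lt_0_compat; [lra | apply qprod_pos; exact q_basic]).
  lra.
Qed.

Lemma cantor_tail_range (n : nat) : 0 <= cantor_tail q E x n < 1.
Proof.
  unfold cantor_tail. assert (Hp := qprod_pos q q_basic n). split.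
  - apply Rmult_le_pos; [lra|]. assert (H := cantor_partial_le n). lra.
  - replace 1 with (qprod q n * (1 / qprod q n)) by (field; lra).
    apply Rmult_lt_compat_l; [exact Hp|]. assert (H := lt_cantor_partial_add n). lra.
Qed.

Lemma TQ_cantor_tail (n : nat) : TQ q n x = cantor_tail q E x n.
Proof.
  destruct (qprod_cantor_partial_integer q q_basic E n) as [z Hz].
  unfold TQ. replace (qprod q n * x) with (IZR z + cantor_tail q E x n).
  - apply frac_IZR_plus, cantor_tail_range.
  - unfold cantor_tail. rewrite <- Hz. ring.
Qed.

End CantorTail.

Lemma TQ_close (q : nat -> nat) (x y : R) (E F : nat -> Z) (n : nat) :
  basic_seq q -> cantor_expansion q x E -> cantor_expansion q y F ->
  Rabs (TQ q n x - TQ q n y) <= (IZR (Z.abs (E (S n) - F (S n))) + 1) / INR (q (S n)).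
Proof.
  intros Hq Hx Hy.
  rewrite (TQ_cantor_tail q Hq E x Hx), (TQ_cantor_tail q Hq F y Hy),
    (cantor_tail_S q Hq E x n), (cantor_tail_S q Hq F y n).
  assert (Hrx := cantor_tail_range q Hq E x Hx (S n)).
  assert (Hry := cantor_tail_range q Hq F y Hy (S n)).
  assert (HQ := INR_q_ge2 q Hq n).
  set (rx := cantor_tail q E x (S n)) in *. set (ry := cantor_tail q F y (S n)) in *.
  set (Q := INR (q (S n))) in *.
  replace ((IZR (E (S n)) + rx) / Q - (IZR (F (S n)) + ry) / Q)
    with ((IZR (E (S n) - F (S n)) + (rx - ry)) * / Q) by (rewrite minus_IZR; field; lra).
  rewrite Rabs_mult, (Rabs_pos_eq (/ Q)) by (left; apply Rinv_0_lt_compat; lra).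
  apply Rmult_le_compat_r; [left; apply Rinv_0_lt_compat; lra|].
  eapply Rle_trans; [apply Rabs_triang|].
  rewrite abs_IZR. apply Rplus_le_compat_l. left. apply Rabs_def1; lra.
Qed.

Lemma count_in_ext (u v : nat -> R) (a b : R) (N : nat) :
  (forall n, u n = v n) -> count_in u a b N = count_in v a b N.
Proof. intros Huv. induction N as [|N IH]; simpl; [reflexivity|]. rewrite IH, Huv. reflexivity. Qed.

Lemma count_in_frac (u : nat -> R) (a b : R) (N : nat) :
  (forall n, 0 <= u n < 1) -> count_in (fun n => frac (u n)) a b N = count_in u a b N.
Proof. intros Hu. apply count_in_ext. intro n. apply frac_id, Hu. Qed.

Lemma count_in_split (u : nat -> R) (a b c : R) (N : nat) :
  a <= b -> b <= c -> (count_in u a b N + count_in u b c N)%nat = count_in u a c N.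
Proof.
  intros Hab Hbc. induction N as [|N IH]; simpl; [reflexivity|]. rewrite <- IH.
  destruct (Rle_dec a (u N)), (Rlt_dec (u N) b), (Rle_dec b (u N)), (Rlt_dec (u N) c);
    lia || lra.
Qed.

Lemma count_in_unit (u : nat -> R) (N : nat) :
  (forall n, 0 <= u n < 1) -> count_in u 0 1 N = N.
Proof.
  intros Hu. induction N as [|N IH]; simpl; [reflexivity|]. rewrite IH.
  destruct (Hu N). destruct (Rle_dec 0 (u N)), (Rlt_dec (u N) 1); lia || lra.
Qed.

(* An index counted for [u] but not for [v] has [|u n - v n| > d], hence [c n / d > 1]. *)
Lemma count_in_le_of_close (u v c : nat -> R) (a b a' b' d : R) (N : nat) :
  0 < d -> (forall n, Rabs (u n - v n) <= c n) ->
  (forall n, a <= u n < b -> Rabs (u n - v n) <= d -> a' <= v n < b') ->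
  INR (count_in u a b N) <= INR (count_in v a' b' N) + sum_upto c N / d.
Proof.
  intros Hd Hc Himp. induction N as [|N IH]; simpl count_in; simpl sum_upto.
  - simpl. unfold Rdiv. lra.
  - rewrite !plus_INR.
    assert (Hcn : 0 <= c N / d).
    { apply Rle_mult_inv_pos; [eapply Rle_trans; [apply Rabs_pos | apply Hc] | exact Hd]. }
    replace ((sum_upto c N + c N) / d) with (sum_upto c N / d + c N / d) by (field; lra).
    assert (Hjump : a <= u N < b -> ~ (a' <= v N < b') -> 1 < c N / d).
    { intros Hu Hv. assert (Hfar : d < Rabs (u N - v N)).
      { destruct (Rle_lt_dec (Rabs (u N - v N)) d) as [Hnear|]; [|assumption].
        exfalso. exact (Hv (Himp N Hu Hnear)). }
      apply (Rmult_lt_reg_r d); [exact Hd|]. unfold Rdiv.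
      rewrite Rmult_assoc, Rinv_l, Rmult_1_r by lra. specialize (Hc N). lra. }
    destruct (Rle_dec a (u N)), (Rlt_dec (u N) b), (Rle_dec a' (v N)), (Rlt_dec (v N) b');
      simpl; try lra.
    all: assert (1 < c N / d) by (apply Hjump; [lra | intros []; lra]); lra.
Qed.

Definition frequency (u : nat -> R) (a b : R) (N : nat) : R := INR (count_in u a b N) / INR N.

Lemma frequency_le_of_close (u v c : nat -> R) (a b a' b' d : R) (N : nat) :
  (1 <= N)%nat -> 0 < d -> (forall n, Rabs (u n - v n) <= c n) ->
  (forall n, a <= u n < b -> Rabs (u n - v n) <= d -> a' <= v n < b') ->
  frequency u a b N <= frequency v a' b' N + sum_upto c N / INR N / d.
Proof.
  intros HN Hd Hc Himp. unfold frequency.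
  assert (HNpos : 0 < INR N) by (apply lt_0_INR; lia).
  replace (INR (count_in v a' b' N) / INR N + sum_upto c N / INR N / d)
    with ((INR (count_in v a' b' N) + sum_upto c N / d) / INR N) by (field; lra).
  apply Rmult_le_compat_r; [left; apply Rinv_0_lt_compat; exact HNpos|].
  exact (count_in_le_of_close u v c a b a' b' d N Hd Hc Himp).
Qed.

Lemma frequency_nonneg (u : nat -> R) (a b : R) (N : nat) : 0 <= frequency u a b N.
Proof.
  unfold frequency. destruct N as [|N].
  - simpl. rewrite Rdiv_0_r. lra.
  - apply Rle_mult_inv_pos; [apply pos_INR | apply lt_0_INR; lia].
Qed.

Lemma frequency_partition (u : nat -> R) (a b : R) (N : nat) :
  (1 <= N)%nat -> (forall n, 0 <= u n < 1) -> 0 <= a -> a <= b -> b <= 1 ->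
  frequency u 0 a N + frequency u a b N + frequency u b 1 N = 1.
Proof.
  intros HN Hu Ha Hab Hb. unfold frequency.
  assert (HNpos : 0 < INR N) by (apply lt_0_INR; lia).
  assert (Hsum : INR (count_in u 0 a N) + INR (count_in u a b N) + INR (count_in u b 1 N) = INR N).
  { rewrite <- (count_in_unit u N Hu) at 4.
    rewrite <- (count_in_split u 0 b 1 N), <- (count_in_split u 0 a b N) by lra.
    rewrite !plus_INR. ring. }
  field_simplify; [|lra]. rewrite Hsum. field. lra.
Qed.

Section UniformDistributionTransfer.

Variables u v c : nat -> R.
Hypothesis u_range : forall n, 0 <= u n < 1.
Hypothesis v_range : forall n, 0 <= v n < 1.
Hypothesis uv_close : forall n, Rabs (u n - v n) <= c n.
Hypothesis c_cesaro : Un_cv (fun N => sum_upto c N / INR N) 0.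
Hypothesis u_ud : u_d_mod1 u.

(* Points of [u] in [[a + d, b - d)] drag the nearby points of [v] into [[a, b)]. *)
Lemma frequency_lower_bound (a b e : R) :
  0 <= a -> a <= b -> b <= 1 -> 0 < e ->
  exists N0, forall N, (N0 <= N)%nat -> b - a - e < frequency v a b N.
Proof.
  intros Ha Hab Hb He.
  destruct (Rle_lt_dec (b - a) (e / 2)) as [Hsmall|Hlarge].
  { exists 0%nat. intros N _. assert (H := frequency_nonneg v a b N). lra. }
  set (d := e / 4).
  destruct (u_ud (a + d) (b - d) ltac:(unfold d; lra) ltac:(unfold d; lra)
              ltac:(unfold d; lra) (e / 4) ltac:(lra)) as [N1 HN1].
  destruct (c_cesaro (d * (e / 4))) as [N2 HN2].
  { unfold d. apply Rmult_lt_0_compat; lra. }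
  exists (max 1 (max N1 N2)). intros N HN.
  specialize (HN1 N ltac:(lia)). specialize (HN2 N ltac:(lia)).
  unfold Rdist in HN1, HN2. rewrite count_in_frac in HN1 by exact u_range.
  rewrite Rminus_0_r in HN2. apply Rabs_def2 in HN1. apply Rabs_def2 in HN2.
  assert (Hcmp := frequency_le_of_close u v c (a + d) (b - d) a b d N ltac:(lia)
                    ltac:(unfold d; lra) uv_close).
  assert (Herr : sum_upto c N / INR N / d < e / 4).
  { apply (Rmult_lt_reg_r d); [unfold d; lra|]. unfold Rdiv at 1.
    rewrite Rmult_assoc, Rinv_l, Rmult_1_r by (unfold d; lra). lra. }
  assert (Hshift : forall n, a + d <= u n < b - d -> Rabs (u n - v n) <= d -> a <= v n < b).
  { intros n Hn Hnear.
    assert (H1 := Rle_abs (u n - v n)). assert (H2 := Rle_abs (v n - u n)).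
    rewrite Rabs_minus_sym in H2. lra. }
  specialize (Hcmp Hshift). unfold frequency, d in *. lra.
Qed.

(* Upper bounds follow from the lower bounds on the complementary intervals. *)
Lemma u_d_mod1_transfer : u_d_mod1 v.
Proof.
  intros a b Ha Hab Hb e He.
  destruct (frequency_lower_bound a b e Ha (Rlt_le _ _ Hab) Hb He) as [N1 HN1].
  destruct (frequency_lower_bound 0 a (e / 2) (Rle_refl 0) Ha ltac:(lra) ltac:(lra)) as [N2 HN2].
  destruct (frequency_lower_bound b 1 (e / 2) ltac:(lra) Hb (Rle_refl 1) ltac:(lra)) as [N3 HN3].
  exists (max 1 (max N1 (max N2 N3))). intros N HN.
  specialize (HN1 N ltac:(lia)). specialize (HN2 N ltac:(lia)). specialize (HN3 N ltac:(lia)).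
  assert (Hpart := frequency_partition v a b N ltac:(lia) v_range Ha (Rlt_le _ _ Hab) Hb).
  unfold Rdist. rewrite count_in_frac by exact v_range.
  apply Rabs_def1; unfold frequency in *; lra.
Qed.

End UniformDistributionTransfer.

Theorem theorem3p2 (q : nat -> nat) (x y : R) (E F : nat -> Z) :
  basic_seq q ->
  cantor_expansion q x E ->
  cantor_expansion q y F ->
  Q_distribution_normal q x ->
  Un_cv (fun N => sum_f 1 N (fun n => (IZR (Z.abs (E n - F n)) + 1) / INR (q n)) / INR N) 0 ->
  Q_distribution_normal q y.
Proof.
  intros Hq Hx Hy Hnormal Hcesaro.
  apply (u_d_mod1_transfer (fun n => TQ q n x) (fun n => TQ q n y)
           (fun n => (IZR (Z.abs (E (S n) - F (S n))) + 1) / INR (q (S n)))).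
  - intro n. apply frac_range.
  - intro n. apply frac_range.
  - intro n. exact (TQ_close q x y E F n Hq Hx Hy).
  - refine (Un_cv_ext_S _ _ _ _ Hcesaro). intro N.
    rewrite sum_f_1_sum_upto by lia. reflexivity.
  - exact Hnormal.
Qed.
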